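(* Under both the cost preference model and the overlap preference model, the approval-maximising rule is strategyproof over the class $\mathcal{I}_{\mathit{unit}}$ of allocation instances with unit costs; that is, for every allocation instance $I=\langle\mathcal{P},c,B\rangle$ in which all projects of $\mathcal{P}$ have the same cost, every profile $\boldsymbol{A}$ and every agent $i\in\mathcal{N}$, $F(I,(\boldsymbol{A}_{-i},\mathit{top}_i(\mathcal{P})))\succeq_{\mathit{top}_i(\mathcal{P})}F(I,\boldsymbol{A})$, where $F$ is the approval-maximising rule.
   Context: Let $\mathbb{P}=\{p_1,\dots,p_m\}$ be a finite set of projects, $c:\mathbb{P}\to\mathbb{N}$ a cost function with $c(P)=\sum_{p\in P}c(p)$, $B\in\mathbb{N}$ a budget with $c(p)\le B$ for all $p$; agents $\mathcal{N}=\{1,\dots,n\}$. An allocation instance is $I=\langle\mathcal{P},c,B\rangle$ with $\mathcal{P}\subseteq\mathbb{P}$; a profile is $\boldsymbol{A}=(A_1,\dots,A_n)$ with $A_i\subseteq\mathcal{P}$; $(\boldsymbol{A}_{-i},A_i')$ replaces $A_i$ by $A_i'$; $n_p^{\boldsymbol{A}}=|\{i:p\in A_i\}|$; $\mathcal{A}(I)$ is the set of $A\subseteq\mathcal{P}$ with $c(A)\le B$. Tie-breaking: for a nonempty family $\mathfrak{P}$ of subsets of $\mathbb{P}$, $T(\mathfrak{P})$ is the unique $P\in\mathfrak{P}$ such that for all $P'\in\mathfrak{P}\setminus\{P\}$ the lowest-index project of $(P\setminus P')\cup(P'\setminus P)$ lies in $P$. The approval-maximising rule returns $F(I,\boldsymbol{A})=T(\operatorname*{argmax}_{A\in\mathcal{A}(I)}\sum_{p\in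 A}n_p^{\boldsymbol{A}})$. Greedy selection $\mathit{GREED}(P,\gg)$, for $P\subseteq\mathbb{P}$ and a strict linear order $\gg$ on $P$, examines projects in the order $\gg$ and selects a project iff doing so keeps the total cost of selected projects at most $B$. Each agent $i$ has a strict linear order $\rhd_i$ on $\mathbb{P}$ and ideal set $\mathit{top}_i(\mathcal{P})=\mathit{GREED}(\mathcal{P},\rhd_i|_{\mathcal{P}})$. For $P\subseteq\mathbb{P}$: under the overlap model $A\succeq_P A'$ iff $|A\cap P|\ge|A'\cap P|$; under the cost model $A\succeq_P A'$ iff $c(A\cap P)\ge c(A'\cap P)$. *)

From mathcomp Require Import all_boot all_order.
From mathcomp Require Import perm.
Set Implicit Arguments. Unset Strict Implicit. Unset Printing Implicit Defensive.

Section PB.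
(* Projects p_1..p_m are the ordinals 'I_m; index order = order of 'I_m. *)
Variable m : nat.
Notation proj := 'I_m.
Variable c : proj -> nat.
Variable B : nat.

Definition cost (S : {set proj}) : nat := \sum_(p in S) c p.

Definition tb_beats (S S' : {set proj}) : bool :=
  [exists p : proj, [&& p \in S, p \notin S' &
     [forall q : proj, (q < p)%N ==> ((q \in S) == (q \in S'))]]].

(* T(family): the unique member beating all others (set0 if none exists,
   which cannot happen for a nonempty family). *)
Definition tiebreak (fam : {set {set proj}}) : {set proj} :=
  odflt set0 [pick S in fam | [forall S' in fam, (S' != S) ==> tb_beats S S']].

Definition napp (n : nat) (A : 'I_n -> {set proj}) (p : proj) : nat :=
  #|[set i : 'I_n | p \in A i]|.

Definition score (n : nat) (A : 'I_n -> {set proj}) (S : {set proj}) : nat :=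
  \sum_(p in S) napp A p.

Definition feasible (P : {set proj}) : {set {set proj}} :=
  [set S : {set proj} | (S \subset P) && (cost S <= B)].

Definition approval_max (P : {set proj}) (n : nat) (A : 'I_n -> {set proj})
  : {set proj} :=
  tiebreak [set S in feasible P |
             [forall S' in feasible P, score A S' <= score A S]].

(* GREED(P, >>) where the order is given by the sequence s (first = best). *)
Definition greed (s : seq proj) : {set proj} :=
  foldl (fun S p => if cost (p |: S) <= B then p |: S else S) set0 s.

(* A strict linear order on projects is encoded by a permutation r:
   r k is the (k+1)-th most preferred project. *)
Definition pref_list (r : {perm proj}) : seq proj := [seq r k | k <- enum 'I_m].

Definition top (r : {perm proj}) (P : {set proj}) : {set proj} :=
  greed [seq p <- pref_list r | p \in P].

Definition overlap_ge (Q S S' : {set proj}) : bool := #|S' :&: Q| <= #|S :&: Q|.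
Definition cost_ge (Q S S' : {set proj}) : bool := cost (S' :&: Q) <= cost (S :&: Q).

End PB.

Definition replace_ballot (m n : nat) (A : 'I_n -> {set 'I_m}) (i : 'I_n)
  (Ai : {set 'I_m}) : 'I_n -> {set 'I_m} :=
  fun j => if j == i then Ai else A j.

(* With unit costs the feasible sets are the subsets of P of at most some size
   k, and the winning set has maximum size.  Let F and F' be the outcomes
   before and after agent i reports T, and suppose |F' ∩ T| < |F ∩ T|.  As
   |F| <= |F'|, there are x ∈ (F ∩ T) \ F' and y ∈ F' \ (F ∪ T).  Optimality
   of F against F - x + y and of F' against F' - y + x bounds the approval
   counts of x and y in both profiles; since the report adds an approval to x
   and none to y, both exchanges are ties, and the tie-breaking then demands
   both x < y and y < x.  Nothing is used about T beyond its being the reported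
   ballot. *)

From mathcomp Require Import all_boot all_order perm.
From mathcomp Require Import zify.
Set Implicit Arguments. Unset Strict Implicit. Unset Printing Implicit Defensive.

Section TieBreaking.
Variable m : nat.
Implicit Types (S T : {set 'I_m}) (fam : {set {set 'I_m}}).

Lemma tb_beatsP S S' :
  reflect (exists p, [/\ p \in S, p \notin S' &
                         forall q : 'I_m, q < p -> (q \in S) = (q \in S')])
          (tb_beats S S').
Proof.
apply: (iffP existsP) => [[p /and3P[pS pS' /forallP agree]]|[p [pS pS' agree]]].
  by exists p; split=> // q qp; apply/eqP; exact: implyP (agree q) qp.
exists p; rewrite pS pS'; apply/forallP => q; apply/implyP => qp.
by rewrite agree.
Qed.

Lemma tb_beats_irr S : ~~ tb_beats S S.
Proof. by apply/tb_beatsP => -[p [->]]. Qed.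

Lemma tb_beats_trans S' S S'' : tb_beats S S' -> tb_beats S' S'' -> tb_beats S S''.
Proof.
move=> /tb_beatsP[p [pS pS' agS]] /tb_beatsP[p' [p'S' p'S'' agS']].
apply/tb_beatsP; case: (ltngtP p p') => [pp'|p'p|/val_inj eqp].
- exists p; split=> // [|q qp]; first by rewrite -agS'.
  by rewrite agS // agS' // (ltn_trans qp pp').
- exists p'; split=> // [|q qp']; first by rewrite agS.
  by rewrite agS ?agS' // (ltn_trans qp' p'p).
- by move: pS'; rewrite eqp p'S'.
Qed.

Lemma tb_beats_total S S' : S != S' -> tb_beats S S' || tb_beats S' S.
Proof.
move=> neqSS'; pose D := [pred p : 'I_m | (p \in S) != (p \in S')].
have [p0 Dp0] : exists p0, D p0.
  apply/existsP; apply: contraNT neqSS' => /existsPn sameS.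
  by apply/eqP/setP => p; apply/eqP/negbNE/sameS.
case: (arg_minnP val Dp0) => p Dp minp.
have agree (q : 'I_m) : q < p -> (q \in S) = (q \in S').
  by move=> qp; apply/eqP; apply: contraTT qp => Dq; rewrite -leqNgt minp.
move: Dp; rewrite /D /=; case pS: (p \in S); case pS': (p \in S') => //= _.
  by apply/orP; left; apply/tb_beatsP; exists p; rewrite pS pS'.
apply/orP; right; apply/tb_beatsP; exists p; rewrite pS pS'.
by split=> // q /agree.
Qed.

(* A member beaten by the fewest members of [fam] is beaten by none of them. *)
Lemma tiebreak_beats fam S0 : S0 \in fam ->
  tiebreak fam \in fam /\
  {in fam, forall S', S' != tiebreak fam -> tb_beats (tiebreak fam) S'}.
Proof.
move=> famS0; pose beaten S := #|[set S' in fam | tb_beats S' S]|.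
case: (arg_minnP beaten famS0) => S famS minS; have {}famS : S \in fam by [].
have unbeaten : {in fam, forall S', ~~ tb_beats S' S}.
  move=> S' famS'; apply/negP => S'S.
  suff : beaten S' < beaten S by rewrite ltnNge minS.
  apply: proper_card; apply/properP; split.
    apply/subsetP => S''; rewrite !inE => /andP[-> S''S'].
    exact: tb_beats_trans S''S' S'S.
  by exists S'; rewrite !inE ?famS' ?S'S ?tb_beats_irr ?andbF.
rewrite /tiebreak; case: pickP => [T /andP[famT /forall_inP T_beats]|noT] /=.
  by split=> // S' famS' S'T; exact: implyP (T_beats S' famS') S'T.
case/negP: (noT S); rewrite /= famS; apply/forall_inP => S' famS'.
apply/implyP; rewrite eq_sym => /tb_beats_total.
by rewrite (negbTE (unbeaten S' famS')) orbF.
Qed.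

Lemma tb_beats_setU1 S q : q \notin S -> ~~ tb_beats S (q |: S).
Proof. by move=> qS; apply/tb_beatsP => -[p [pS]]; rewrite in_setU1 pS orbT. Qed.

Lemma tb_beats_swap S x y : x \in S -> y \notin S ->
  tb_beats S (y |: (S :\ x)) -> x < y.
Proof.
move=> xS yS /tb_beatsP[p [pS + agree]].
rewrite in_setU1 in_setD1 pS andbT negb_or negbK => /andP[py /eqP px].
rewrite -{}px in xS *; rewrite ltn_neqAle.
have -> : nat_of_ord p != y by apply: contraNneq py => /val_inj ->.
rewrite leqNgt; apply/negP => yp; move: (agree y yp).
by rewrite (negbTE yS) setU11.
Qed.

End TieBreaking.

Section ApprovalMax.
Variables (m : nat) (c : 'I_m -> nat) (B : nat) (P : {set 'I_m}).
Implicit Types (S T : {set 'I_m}) (x y : 'I_m).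

Lemma score_setU1D1 n (A : 'I_n -> {set 'I_m}) S x y : x \in S -> y \notin S ->
  score A (y |: (S :\ x)) + napp A x = score A S + napp A y.
Proof.
move=> xS yS; rewrite /score big_setU1 ?in_setD1 ?(negbTE yS) ?andbF //=.
rewrite (big_setD1 x xS) /= [RHS]addnAC addnAC; congr (_ + _); exact: addnC.
Qed.

Lemma napp_replace_ballot n (A : 'I_n -> {set 'I_m}) i T p :
  napp (replace_ballot A i T) p + (p \in A i) = napp A p + (p \in T).
Proof.
rewrite /napp (cardsD1 i [set j | _ \in _]) (cardsD1 i [set j | p \in A j]).
rewrite !inE /replace_ballot eqxx addnAC [RHS]addnAC (addnC (p \in T)); congr (_ + _).
by apply: eq_card => j; rewrite !inE; case: eqP.
Qed.

Lemma approval_maxP n (A : 'I_n -> {set 'I_m}) (F := approval_max c B P A) :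
  [/\ F \subset P, cost c F <= B,
      forall S, S \subset P -> cost c S <= B -> score A S <= score A F &
      forall S, S \subset P -> cost c S <= B -> score A F <= score A S ->
        S != F -> tb_beats F S].
Proof.
have feas0 : set0 \in feasible c B P by rewrite inE sub0set /cost big_set0.
have [S0 feasS0 maxS0] := arg_maxnP (score A) feas0.
have {}feasS0 : S0 \in feasible c B P by [].
have [] := @tiebreak_beats _ [set S in feasible c B P |
   [forall S' in feasible c B P, score A S' <= score A S]] S0.
  by rewrite inE feasS0; apply/forall_inP.
rewrite -/F inE => /andP[]; rewrite inE => /andP[FP costF] /forall_inP maxF F_beats.
split=> // [S SP costS|S SP costS scoreFS]; first by apply: maxF; rewrite inE SP.
apply: F_beats; rewrite !inE SP costS; apply/forall_inP => S' feasS'.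
exact: leq_trans (maxF S' feasS') scoreFS.
Qed.

Section UnitCost.
Hypothesis c_unit : forall p q, p \in P -> q \in P -> c p = c q.

Lemma cost_unit S p : S \subset P -> p \in P -> cost c S = #|S| * c p.
Proof.
move=> SP pP; rewrite /cost -sum_nat_const; apply: eq_bigr => q qS.
exact: c_unit (subsetP SP q qS) pP.
Qed.

Lemma leq_cost_card S S' :
  S \subset P -> S' \subset P -> #|S| <= #|S'| -> cost c S <= cost c S'.
Proof.
move=> SP S'P leSS'; have [P0|[p pP]] := set_0Vmem P.
  by move: SP; rewrite P0 subset0 => /eqP ->; rewrite /cost big_set0.
by rewrite !(cost_unit _ pP) // leq_mul2r leSS' orbT.
Qed.

Lemma setU1D1_subset S x y : S \subset P -> y \in P -> y |: (S :\ x) \subset P.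
Proof. by move=> SP yP; rewrite subUset sub1set yP (subset_trans (subsetDl S _)). Qed.

Lemma cost_setU1D1 S x y : S \subset P -> x \in S -> y \in P -> y \notin S ->
  cost c (y |: (S :\ x)) = cost c S.
Proof.
move=> SP xS yP yS; rewrite !(cost_unit _ yP) ?setU1D1_subset //.
by rewrite cardsU1 in_setD1 (negbTE yS) andbF (cardsD1 x S) xS.
Qed.

Lemma card_le_approval_max n (A : 'I_n -> {set 'I_m}) S :
  S \subset P -> cost c S <= B -> #|S| <= #|approval_max c B P A|.
Proof.
move: (approval_maxP A); set F := approval_max c B P A; case=> FP _ _ F_beats.
move=> SP costS; have [PF|/subsetPn[q qP qF]] := boolP (P \subset F).
  exact/subset_leq_card/(subset_trans SP).
have qFP : q |: F \subset P by rewrite subUset sub1set qP.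
have costqF : B < cost c (q |: F).
  rewrite ltnNge; apply: contraNN (tb_beats_setU1 qF) => costqF.
  apply: F_beats => //; first by rewrite /score big_setU1 //= leq_addl.
  by apply: contraNneq qF => <-; rewrite setU11.
move: costqF costS; rewrite !(cost_unit _ qP) // cardsU1 qF; nia.
Qed.

(* Under unit costs F - x + y is again feasible, so it competes with F. *)
Lemma approval_max_exchange n (A : 'I_n -> {set 'I_m}) x y
    (F := approval_max c B P A) :
  x \in F -> y \in P -> y \notin F ->
  napp A y <= napp A x /\ (napp A x <= napp A y -> x < y).
Proof.
move=> xF yP yF; move: (approval_maxP A); rewrite -/F => -[FP costF maxF F_beats].
have GP := setU1D1_subset x FP yP.
have costG : cost c (y |: (F :\ x)) <= B by rewrite cost_setU1D1.
have scoreG := score_setU1D1 A xF yF; have scoreGF := maxF _ GP costG.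
split=> [|xy]; first by rewrite -(leq_add2l (score A F)) -scoreG leq_add2r.
apply: (tb_beats_swap xF yF); apply: F_beats => //.
  by rewrite -(leq_add2r (napp A y)) -scoreG leq_add2l.
by apply: contraNneq yF => <-; rewrite setU11.
Qed.

Lemma card_approval_max_replace_ballot n (A : 'I_n -> {set 'I_m}) i T :
  #|approval_max c B P A :&: T| <=
  #|approval_max c B P (replace_ballot A i T) :&: T|.
Proof.
set A' := replace_ballot A i T.
set F := approval_max c B P A; set F' := approval_max c B P A'.
rewrite leqNgt; apply/negP => ltF'F.
have [FP costF _ _] := approval_maxP A; have [F'P _ _ _] := approval_maxP A'.
have /subsetPn[x /setIP[xF xT] xF'T] : ~~ (F :&: T \subset F' :&: T).
  by apply: contraTN ltF'F => /subset_leq_card; rewrite leqNgt.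
have /subsetPn[y /setDP[yF' yT] yFT] : ~~ (F' :\: T \subset F :\: T).
  apply: contraTN ltF'F => /subset_leq_card; rewrite -leqNgt.
  have := card_le_approval_max A' FP costF.
  by rewrite -/F' -(cardsID T F) -(cardsID T F'); lia.
have {xF'T}xF' : x \notin F' by apply: contra xF'T => xF'; apply/setIP.
have {yFT}yF : y \notin F by apply: contra yFT => yF; apply/setDP.
have [leyxA tie_xy] := approval_max_exchange xF (subsetP F'P y yF') yF.
have [lexyA' tie_yx] := approval_max_exchange yF' (subsetP FP x xF) xF'.
have [tieA tieA'] : napp A x <= napp A y /\ napp A' y <= napp A' x.
  have := napp_replace_ballot A i T x; have := napp_replace_ballot A i T y.
  rewrite xT (negbTE yT) -/A'; case: (x \in A i); case: (y \in A i); lia.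
by have := ltn_trans (tie_xy tieA) (tie_yx tieA'); rewrite ltnn.
Qed.

End UnitCost.
End ApprovalMax.

Theorem proposition9 (m : nat) (c : 'I_m -> nat) (B : nat)
  (hcB : forall p : 'I_m, c p <= B)
  (P : {set 'I_m})
  (hunit : forall p q : 'I_m, p \in P -> q \in P -> c p = c q)
  (n : nat) (A : 'I_n -> {set 'I_m})
  (hA : forall j : 'I_n, A j \subset P)
  (pref : 'I_n -> {perm 'I_m}) (i : 'I_n) :
  let T := top c B (pref i) P in
  let F := approval_max c B P in
  cost_ge c T (F n (replace_ballot A i T)) (F n A) /\
  overlap_ge T (F n (replace_ballot A i T)) (F n A).
Proof.
move=> T F; have leT := card_approval_max_replace_ballot B hunit A i T.
split; last exact: leT.
have [FP _ _ _] := approval_maxP c B P A.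
have [F'P _ _ _] := approval_maxP c B P (replace_ballot A i T).
by apply: (leq_cost_card hunit _ _ leT); apply: subset_trans (subsetIl _ _) _.
Qed.
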